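(* Let $n\ge1$ and let $J\subset S$ be a homogeneous ideal. Suppose that for some $m>0$, $J_m$ is nonzero and spanned by an initial segment of degree-$m$ monomials with respect to the degree reverse lexicographic order. If $J_{m'}\neq0$ for some $m'<m$ (i.e. $J$ is not generated in degrees $\ge m$), then the Hilbert polynomial of $S/J$ is constant.
   Context: $S=k[x_0,\dots,x_n]=\bigoplus_m S_m$ over an algebraically closed field $k$ of characteristic zero. The degree reverse lexicographic order with $x_0\succ\cdots\succ x_n$: for monomials of the same degree, $x^\alpha\succ x^\beta$ iff the last nonzero entry of $\alpha-\beta$ is negative. An initial segment of degree $t$ is the set of the first $\ell$ monomials of degree $t$ in this order, for some $\ell$. *)

From HB Require Import structures.
From mathcomp Require Import all_boot all_order all_algebra.
Set Implicit Arguments. Unset Strict Implicit. Unset Printing Implicit Defensive.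
Import Order.TTheory GRing.Theory Num.Theory.
Local Open Scope ring_scope.

(* Monomials of S = k[x_0,...,x_n]: exponent vectors (alpha_0,...,alpha_n). *)
Definition mon (n : nat) := n.+1.-tuple nat.
Definition mdeg (n : nat) (a : mon n) : nat := sumn a.

(* Elements of S: coefficient functions with finite support. *)
Definition spoly (k : fieldType) (n : nat) := mon n -> k.
Definition finsupp (k : fieldType) n (f : spoly k n) : Prop :=
  exists s : seq (mon n), forall a, f a != 0 -> a \in s.
Definition padd (k : fieldType) n (f g : spoly k n) : spoly k n := fun a => f a + g a.
Definition pscale (k : fieldType) n (c : k) (f : spoly k n) : spoly k n := fun a => c * f a.
Definition pzero (k : fieldType) n : spoly k n := fun _ => 0.
Definition xm (k : fieldType) n (a : mon n) : spoly k n :=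
  fun b => if b == a then 1 else 0.
Definition mdec n (a : mon n) (i : 'I_n.+1) : mon n :=
  [tuple (tnth a j - (j == i))%N | j < n.+1].
(* multiplication by the variable x_i *)
Definition mulx (k : fieldType) n (i : 'I_n.+1) (f : spoly k n) : spoly k n :=
  fun a => if (0 < tnth a i)%N then f (mdec a i) else 0.
Definition hcomp (k : fieldType) n (d : nat) (f : spoly k n) : spoly k n :=
  fun a => if mdeg a == d then f a else 0.
(* f is homogeneous of degree d (f = 0 allowed) *)
Definition homog (k : fieldType) n (d : nat) (f : spoly k n) : Prop :=
  forall a, f a != 0 -> mdeg a = d.

(* J (a predicate on S) is a homogeneous ideal of S: a k-subspace of S,
   closed under multiplication by the variables (hence by all of S),
   and containing the homogeneous components of its elements. *)
Definition homog_ideal (k : fieldType) n (J : spoly k n -> Prop) : Prop :=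
  (forall f, J f -> finsupp f) /\
  J (@pzero k n) /\
  (forall f g, J f -> J g -> J (padd f g)) /\
  (forall c f, J f -> J (pscale c f)) /\
  (forall i f, J f -> J (mulx i f)) /\
  (forall d f, J f -> J (hcomp d f)).

(* degree reverse lexicographic order on monomials of the same degree:
   a >- b iff the last nonzero entry of a - b is negative *)
Definition revlex_gt n (a b : mon n) : bool :=
  [exists i : 'I_n.+1, (tnth a i < tnth b i)%N &&
     [forall j : 'I_n.+1, (i < j)%N ==> (tnth a j == tnth b j)]].

Definition mond (n d : nat) :=
  {t : n.+1.-tuple 'I_d.+1 | sumn (map (@nat_of_ord _) t) == d}.
Definition mon_of n d (m : mond n d) : mon n := map_tuple (@nat_of_ord _) (val m).

(* a lies among the first l monomials of degree m in degrevlex order *)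
Definition in_init_seg n (m l : nat) (a : mon n) : bool :=
  (mdeg a == m) &&
  (#|[pred b : mond n m | revlex_gt (mon_of b) a]| < l)%N.

(* S_d identified with {ffun mond n d -> k}; embedding into S *)
Definition emb (k : fieldType) n d (v : {ffun mond n d -> k^o}) : spoly k n :=
  fun a => \sum_(b : mond n d) v b * xm k (mon_of b) a.

(* dim_k (S/J)_d = c *)
Definition hilb_fun_is (k : fieldType) n (J : spoly k n -> Prop) (d c : nat) : Prop :=
  exists V : {vspace {ffun mond n d -> k^o}},
    (forall v, v \in V <-> J (emb v)) /\ (#|{: mond n d}| - \dim V)%N = c.

Definition hilb_poly_is (k : fieldType) n (J : spoly k n -> Prop) (P : {poly rat}) : Prop :=
  exists d0, forall d, (d0 <= d)%N -> exists c, hilb_fun_is J d c /\ P.[d%:R] = c%:R.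

(** Let x_n be the last variable. A nonzero f in J_{m'} with m' < m gives
    x_n^(m-m') f in J_m, and its support contains a monomial divisible by x_n.
    Every degree-m monomial not divisible by x_n is revlex-larger than any one
    divisible by x_n, so the initial segment J_m contains all of them, and so
    does J_d for every d >= m. Hence S_(d+1) = x_n S_d + J_(d+1) while
    x_n J_d lies in J_(d+1), which gives dim (S/J)_(d+1) <= dim (S/J)_d for
    d >= m: the Hilbert function is eventually nonincreasing, hence eventually
    constant. *)
From HB Require Import structures.
From mathcomp Require Import all_boot all_order all_algebra.
From mathcomp Require Import zify.
From Stdlib Require Import FunctionalExtensionality Classical ClassicalEpsilon.
Set Implicit Arguments. Unset Strict Implicit. Unset Printing Implicit Defensive.
Import Order.TTheory GRing.Theory Num.Theory.
Local Open Scope ring_scope.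

Definition minc {n} (a : mon n) (i : 'I_n.+1) : mon n :=
  [tuple (tnth a j + (j == i))%N | j < n.+1].

Section Monomials.
Variable n : nat.
Implicit Types (a b c : mon n) (i j : 'I_n.+1).

Lemma tnth_minc a i j : tnth (minc a i) j = (tnth a j + (j == i))%N.
Proof. by rewrite tnth_mktuple. Qed.

Lemma tnth_mdec a i j : tnth (mdec a i) j = (tnth a j - (j == i))%N.
Proof. by rewrite tnth_mktuple. Qed.

Lemma minc_gt0 a i : (0 < tnth (minc a i) i)%N.
Proof. by rewrite tnth_minc eqxx addn1. Qed.

Lemma mincK i : cancel (minc^~ i) (fun a => mdec a i).
Proof. by move=> a; apply: eq_from_tnth => j; rewrite tnth_mdec tnth_minc; lia. Qed.

Lemma mdecK a i : (0 < tnth a i)%N -> minc (mdec a i) i = a.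
Proof.
move=> a_i; apply: eq_from_tnth => j; rewrite tnth_minc tnth_mdec.
by case: eqP => [->|]; lia.
Qed.

Lemma minc_inj i : injective (minc^~ i).
Proof. exact: can_inj (mincK i). Qed.

Lemma mdegE a : mdeg a = (\sum_(j < n.+1) tnth a j)%N.
Proof. by rewrite /mdeg sumnE big_tuple. Qed.

Lemma mdeg_minc a i : mdeg (minc a i) = (mdeg a).+1.
Proof.
rewrite !mdegE (bigD1 i) //= [in RHS](bigD1 i) //= tnth_minc eqxx addn1 addSn.
by congr (_ + _).+1%N; apply: eq_bigr => j /negbTE j_i; rewrite tnth_minc j_i addn0.
Qed.

Lemma mdeg_mdec a i : (0 < tnth a i)%N -> mdeg (mdec a i) = (mdeg a).-1.
Proof. by move=> a_i; rewrite -{2}(mdecK a_i) mdeg_minc. Qed.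

Lemma mdeg_iter_minc t a i : mdeg (iter t (minc^~ i) a) = (mdeg a + t)%N.
Proof. by elim: t => [|t IH] /=; rewrite ?addn0 // mdeg_minc IH addnS. Qed.

Lemma tnth_iter_minc t a i : tnth (iter t (minc^~ i) a) i = (tnth a i + t)%N.
Proof. by elim: t => [|t IH] /=; rewrite ?addn0 // tnth_minc eqxx IH addnS addn1. Qed.

Lemma revlex_gt_trans b a c : revlex_gt a b -> revlex_gt b c -> revlex_gt a c.
Proof.
move=> /existsP[i /andP[ab_i /forallP ab_eq]] /existsP[i' /andP[bc_i' /forallP bc_eq]].
have eq_above (i0 j : 'I_n.+1) : (i <= i0)%N -> (i' <= i0)%N -> (i0 < j)%N ->
    tnth a j == tnth c j.
  move=> le_i le_i' lt_j; move: (ab_eq j) (bc_eq j).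
  by rewrite (leq_ltn_trans le_i) ?(leq_ltn_trans le_i') //= => /eqP-> /eqP->.
case: (ltngtP i i') => [lt_ii'|lt_i'i|/val_inj eq_ii']; apply/existsP.
- exists i'; move: (ab_eq i'); rewrite lt_ii' /= => /eqP->; rewrite bc_i' /=.
  by apply/forallP => j; apply/implyP; apply: eq_above => //; exact: ltnW.
- exists i; move: (bc_eq i); rewrite lt_i'i /= => /eqP<-; rewrite ab_i /=.
  by apply/forallP => j; apply/implyP; apply: eq_above => //; exact: ltnW.
- subst i'; exists i; rewrite (ltn_trans ab_i bc_i') /=.
  by apply/forallP => j; apply/implyP; apply: eq_above.
Qed.

Lemma revlex_gt_last a b : (tnth a ord_max < tnth b ord_max)%N -> revlex_gt a b.
Proof.
move=> lt_ab; apply/existsP; exists ord_max; rewrite lt_ab /=.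
by apply/forallP => j; apply/implyP; rewrite ltnNge -ltnS ltn_ord.
Qed.

Lemma in_init_seg_revlex m l a b :
  in_init_seg m l a -> mdeg b = m -> revlex_gt b a -> in_init_seg m l b.
Proof.
move=> /andP[_ lt_l] b_m gt_ba; rewrite /in_init_seg b_m eqxx /=.
apply: leq_ltn_trans lt_l; apply: subset_leq_card; apply/subsetP => c.
by rewrite !inE => /revlex_gt_trans; apply.
Qed.

End Monomials.

Section MonomialPolynomials.
Variables (k : fieldType) (n : nat).
Implicit Types (f : spoly k n) (a : mon n) (i : 'I_n.+1).

Lemma mulx_minc i f a : mulx i f (minc a i) = f a.
Proof. by rewrite /mulx minc_gt0 mincK. Qed.

Lemma iter_mulx_minc t i f a :
  iter t (mulx i) f (iter t (minc^~ i) a) = f a.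
Proof. by elim: t => //= t IH; rewrite mulx_minc. Qed.

Lemma mulx_xm i a : mulx i (xm k a) = xm k (minc a i).
Proof.
apply: functional_extensionality => b; rewrite /mulx /xm.
have [b_i|b_i] := posnP (tnth b i).
  by case: eqP => // eq_b; move: (minc_gt0 a i); rewrite -eq_b b_i.
by rewrite -{2}(mdecK b_i) (inj_eq (@minc_inj _ i)).
Qed.

Lemma finsupp_xm a : finsupp (xm k a).
Proof. by exists [:: a] => b; rewrite /xm; case: ifP => [/eqP-> | _]; rewrite ?mem_seq1 ?eqxx. Qed.

Lemma homog_xm a : homog (mdeg a) (xm k a).
Proof. by move=> b; rewrite /xm; case: ifP => [/eqP-> | _]; rewrite ?eqxx. Qed.

Lemma homog_hcomp d f : homog d (hcomp d f).
Proof. by move=> a; rewrite /hcomp; case: ifP => [/eqP | _]; rewrite ?eqxx. Qed.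

End MonomialPolynomials.

Lemma vspace_of_subspace_pred (K : fieldType) (vT : vectType K) (P : vT -> Prop) :
  P 0 -> (forall u v, P u -> P v -> P (u + v)) -> (forall c u, P u -> P (c *: u)) ->
  exists U : {vspace vT}, forall v, v \in U <-> P v.
Proof.
move=> P0 PD PZ.
suff grow t (U : {vspace vT}) : (\dim {:vT} - \dim U < t)%N ->
    (forall u, u \in U -> P u) -> exists V : {vspace vT}, forall v, v \in V <-> P v.
  by apply: (grow (\dim {:vT}).+1 0%VS) => [|u /vlineP[c ->]]; rewrite ?scaler0 //; lia.
elim: t U => // t IH U lt_t PU.
have [UP | ] := classic (forall v, P v -> v \in U); first by exists U; split; auto.
move=> /not_all_ex_not[v /(imply_to_and (P v))[Pv vU]].
have lt_dim : (\dim U < \dim (U + <[v]>))%N.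
  by rewrite (ltn_leqif (dimv_leqif_sup (addvSl U _))) subv_add subvv -memvE; apply/negP.
apply: (IH (U + <[v]>)%VS); first by have := dimvS (subvf (U + <[v]>)%VS); lia.
by move=> _ /memv_addP[u Uu [_ /vlineP[c ->] ->]]; apply: PD; [apply: PU | apply: PZ].
Qed.

Lemma dimv_ffun (K : fieldType) (I : finType) :
  \dim (fullv : {vspace {ffun I -> K^o}}) = #|I|.
Proof. by rewrite dimvf /dim /= muln1. Qed.

Section GradedPieces.
Variables (k : fieldType) (n : nat).
Implicit Types (d : nat) (a : mon n).

Lemma mon_of_inj d : injective (@mon_of n d).
Proof.
move=> [s s_d] [t t_d] eq_st; apply: val_inj; apply: eq_from_tnth => j /=.
by apply: val_inj; move: (congr1 (fun u : mon n => tnth u j) eq_st); rewrite !tnth_map.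
Qed.

Lemma mdeg_mon_of d (b : mond n d) : mdeg (mon_of b) = d.
Proof. by case: b => t t_d; apply/eqP. Qed.

Lemma mon_ofP d a : mdeg a = d -> exists b : mond n d, mon_of b = a.
Proof.
move=> a_d; have le_d j : (tnth a j < d.+1)%N.
  by rewrite ltnS -a_d mdegE (bigD1 j) //= leq_addr.
pose t : n.+1.-tuple 'I_d.+1 := [tuple inord (tnth a j) | j < n.+1].
have t_a : map_tuple (@nat_of_ord _) t = a.
  by apply: eq_from_tnth => j; rewrite tnth_map tnth_mktuple inordK.
have t_d : sumn (map (@nat_of_ord _) t) == d.
  by rewrite -[map _ _]/(tval (map_tuple (@nat_of_ord _) t)) t_a -a_d.
by exists (exist _ t t_d).
Qed.

Lemma embE d (v : {ffun mond n d -> k^o}) (b : mond n d) : emb v (mon_of b) = v b.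
Proof.
rewrite /emb (bigD1 b) //= /xm eqxx mulr1 big1 ?addr0 // => c c_b.
by rewrite (inj_eq (@mon_of_inj d)) eq_sym (negbTE c_b) mulr0.
Qed.

Lemma emb_notin d (v : {ffun mond n d -> k^o}) a :
  (forall b : mond n d, mon_of b != a) -> emb v a = 0.
Proof. by move=> a_out; rewrite /emb big1 // => b _; rewrite /xm eq_sym (negbTE (a_out b)) mulr0. Qed.

Lemma emb0 d : emb (0 : {ffun mond n d -> k^o}) = @pzero k n.
Proof. by apply: functional_extensionality => a; rewrite /emb big1 // => b _; rewrite ffunE mul0r. Qed.

Lemma embD d (u v : {ffun mond n d -> k^o}) : emb (u + v) = padd (emb u) (emb v).
Proof.
apply: functional_extensionality => a; rewrite /emb /padd -big_split.
by apply: eq_bigr => b _; rewrite ffunE mulrDl.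
Qed.

Lemma embZ d c (v : {ffun mond n d -> k^o}) : emb (c *: v) = pscale c (emb v).
Proof.
apply: functional_extensionality => a; rewrite /emb /pscale mulr_sumr.
by apply: eq_bigr => b _; rewrite ffunE mulrA.
Qed.

Definition unitv d (b : mond n d) : {ffun mond n d -> k^o} := [ffun c => (c == b)%:R].

Lemma emb_unitv d (b : mond n d) : emb (unitv b) = xm k (mon_of b).
Proof.
apply: functional_extensionality => a; rewrite /emb (bigD1 b) //= ffunE eqxx mul1r.
by rewrite big1 ?addr0 // => c c_b; rewrite ffunE (negbTE c_b) mul0r.
Qed.

Lemma ffun_unitv_sum d (w : {ffun mond n d -> k^o}) : w = \sum_b w b *: unitv b.
Proof.
apply/ffunP => c; rewrite sum_ffunE (bigD1 c) //= !ffunE eqxx big1 ?addr0.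
  by rewrite [_ *: _]mulr1.
by move=> b b_c; rewrite !ffunE eq_sym (negbTE b_c) [_ *: _]mulr0.
Qed.

End GradedPieces.

Definition mulx_ffun (k : fieldType) n (i : 'I_n.+1) d (v : {ffun mond n d -> k^o}) :
    {ffun mond n d.+1 -> k^o} :=
  [ffun b => \sum_a v a * (mon_of b == minc (mon_of a) i)%:R].

Lemma mulx_ffun_is_linear (k : fieldType) n i d : linear (@mulx_ffun k n i d).
Proof.
move=> c u v; apply/ffunP => b; rewrite !ffunE scaler_sumr -big_split /=.
by apply: eq_bigr => a _; rewrite !ffunE mulrDl -scalerAl.
Qed.

HB.instance Definition _ (k : fieldType) n i d :=
  GRing.isLinear.Build k {ffun mond n d -> k^o} {ffun mond n d.+1 -> k^o} _
    (@mulx_ffun k n i d) (@mulx_ffun_is_linear k n i d).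

Section MultiplicationByVariable.
Variables (k : fieldType) (n : nat) (i : 'I_n.+1) (d : nat).
Implicit Types (v : {ffun mond n d -> k^o}) (a : mond n d) (b : mond n d.+1).

Lemma mulx_ffun_minc v a b : mon_of b = minc (mon_of a) i -> mulx_ffun i v b = v a.
Proof.
move=> b_a; rewrite ffunE (bigD1 a) //= b_a eqxx mulr1 big1 ?addr0 // => a' a'_a.
case: eqP => [/minc_inj/mon_of_inj eq_a | _]; last by rewrite mulr0.
by rewrite eq_a eqxx in a'_a.
Qed.

Lemma mulx_ffun_inj : injective (@mulx_ffun k n i d).
Proof.
move=> u v eq_uv; apply/ffunP => a.
have [b b_a] : exists b, mon_of b = minc (mon_of a) i.
  by apply: mon_ofP; rewrite mdeg_minc mdeg_mon_of.
by rewrite -(mulx_ffun_minc u b_a) -(mulx_ffun_minc v b_a) eq_uv.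
Qed.

Lemma mulx_ffun_unitv a b : mon_of b = minc (mon_of a) i -> mulx_ffun i (unitv k a) = unitv k b.
Proof.
move=> b_a; apply/ffunP => b'; rewrite ffunE (bigD1 a) //= !ffunE eqxx mul1r.
rewrite big1 ?addr0; last by move=> a' a'_a; rewrite ffunE (negbTE a'_a) mul0r.
by rewrite -b_a (inj_eq (@mon_of_inj _ _)).
Qed.

Lemma emb_mulx_ffun v : emb (mulx_ffun i v) = mulx i (emb v).
Proof.
apply: functional_extensionality => c; rewrite /mulx.
have [c_deg | c_deg] := eqVneq (mdeg c) d.+1; last first.
  rewrite emb_notin; last by move=> b; apply: contra_neq c_deg => <-; apply: mdeg_mon_of.
  case: ifP => // c_i; rewrite emb_notin // => a; apply: contra_neq c_deg => a_c.
  by rewrite -(mdecK c_i) mdeg_minc -a_c mdeg_mon_of.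
have [b <-] := mon_ofP c_deg; rewrite embE.
have [b_i | b_i] := posnP (tnth (mon_of b) i).
  rewrite ffunE big1 // => a _; case: eqP => [b_a | _]; last by rewrite mulr0.
  by move: (minc_gt0 (mon_of a) i); rewrite -b_a b_i.
have [a a_b] : exists a, mon_of a = mdec (mon_of b) i.
  by apply: mon_ofP; rewrite mdeg_mdec // mdeg_mon_of.
by rewrite -a_b embE (mulx_ffun_minc v (a := a)) // a_b mdecK.
Qed.


End MultiplicationByVariable.

Section HomogeneousIdeal.
Variables (k : fieldType) (n : nat) (J : spoly k n -> Prop).
Hypothesis idealJ : homog_ideal J.

Lemma ideal_finsupp f : J f -> finsupp f.
Proof. by case: idealJ => finJ _; apply: finJ. Qed.

Lemma ideal_mulx i f : J f -> J (mulx i f).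
Proof. by case: idealJ => _ [_ [_ [_ [mulJ _]]]]; apply: mulJ. Qed.

Lemma ideal_iter_mulx t i f : J f -> J (iter t (mulx i) f).
Proof. by move=> Jf; elim: t => //= t; apply: ideal_mulx. Qed.

Lemma ideal_hcomp d f : J f -> J (hcomp d f).
Proof. by case: idealJ => _ [_ [_ [_ [_ hcompJ]]]]; apply: hcompJ. Qed.

Lemma ideal_xm_free_ge (i : 'I_n.+1) m :
  (forall c, mdeg c = m -> tnth c i = 0%N -> J (xm k c)) ->
  forall c, (m <= mdeg c)%N -> tnth c i = 0%N -> J (xm k c).
Proof.
move=> Jm c le_m; move: (subnKC le_m); move: (mdeg c - m)%N => t.
elim: t c {le_m} => [|t IH] c c_deg c_i; first by apply: Jm => //; rewrite -c_deg addn0.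
have [j c_j] : exists j, (0 < tnth c j)%N.
  apply/existsP; apply: contraT; rewrite negb_exists => /forallP c0.
  by move: c_deg; rewrite mdegE big1 ?addnS // => j _; move: (c0 j); lia.
rewrite -(mdecK c_j) -mulx_xm; apply/ideal_mulx/IH.
  by rewrite mdeg_mdec // -c_deg addnS.
by rewrite tnth_mdec c_i.
Qed.

Section InitialSegment.
Variables (m l : nat).
Hypothesis segJ : forall f, finsupp f -> homog m f ->
  (J f <-> forall a, f a != 0 -> in_init_seg m l a).

Lemma init_seg_last_gt0 m' f a : (m' < m)%N -> J f -> homog m' f -> f a != 0 ->
  exists b : mon n, in_init_seg m l b /\ (0 < tnth b ord_max)%N.
Proof.
move=> lt_m' Jf homf fa; pose t := (m - m')%N; pose b := iter t (minc^~ ord_max) a.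
pose g := hcomp m (iter t (mulx ord_max) f).
have b_deg : mdeg b = m by rewrite mdeg_iter_minc (homf _ fa) subnKC // ltnW.
have Jg : J g by apply/ideal_hcomp/ideal_iter_mulx.
have homg : homog m g by exact: homog_hcomp.
exists b; split; last by rewrite tnth_iter_minc addn_gt0 subn_gt0 lt_m' orbT.
apply: ((segJ (ideal_finsupp Jg) homg).1 Jg).
by rewrite /g /hcomp b_deg eqxx iter_mulx_minc.
Qed.

Lemma ideal_xm_free_last (b : mon n) : in_init_seg m l b -> (0 < tnth b ord_max)%N ->
  forall c, mdeg c = m -> tnth c ord_max = 0%N -> J (xm k c).
Proof.
move=> b_seg b_last c c_deg c_last.
apply: (segJ (finsupp_xm k c) _).2; first by rewrite -c_deg; apply: homog_xm.
move=> a; rewrite /xm; case: ifP => [/eqP-> _ | _]; last by rewrite eqxx.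
by apply: in_init_seg_revlex b_seg c_deg _; apply: revlex_gt_last; rewrite c_last.
Qed.

End InitialSegment.

Lemma hilb_fun_exists d : exists c, hilb_fun_is J d c.
Proof.
case: idealJ => _ [J0 [JD [JZ _]]].
have [U UJ] : exists U : {vspace {ffun mond n d -> k^o}}, forall v, v \in U <-> J (emb v).
  apply: vspace_of_subspace_pred; first by rewrite emb0.
    by move=> u v Ju Jv; rewrite embD; apply: JD.
  by move=> c u Ju; rewrite embZ; apply: JZ.
by exists (#|{: mond n d}| - \dim U)%N, U.
Qed.

Lemma hilb_fun_succ_le (i : 'I_n.+1) d c1 c2 :
  (forall c, mdeg c = d.+1 -> tnth c i = 0%N -> J (xm k c)) ->
  hilb_fun_is J d c1 -> hilb_fun_is J d.+1 c2 -> (c2 <= c1)%N.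
Proof.
move=> Jfree [U1 [U1J <-]] [U2 [U2J <-]].
pose f := linfun (@mulx_ffun k n i d).
have fE v : f v = mulx_ffun i v by rewrite lfunE.
have f_inj : lker f == 0%VS by apply/lker0P => u v; rewrite !fE; apply: mulx_ffun_inj.
pose A := (f @: fullv)%VS.
have dimA : \dim A = #|{: mond n d}|.
  by rewrite limg_dim_eq ?dimv_ffun // (eqP f_inj) capv0.
have dim_fU1 : \dim (f @: U1) = \dim U1 by rewrite limg_dim_eq // (eqP f_inj) capv0.
have full : (fullv <= A + U2)%VS.
  apply/subvP => w _; rewrite (ffun_unitv_sum w); apply: memv_suml => b _; apply: memvZ.
  have [b_i | b_i] := posnP (tnth (mon_of b) i).
    apply/(subvP (addvSr A U2))/U2J; rewrite emb_unitv.
    by apply: Jfree; rewrite ?mdeg_mon_of.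
  have [a a_b] : exists a : mond n d, mon_of a = mdec (mon_of b) i.
    by apply: mon_ofP; rewrite mdeg_mdec // mdeg_mon_of.
  rewrite -(@mulx_ffun_unitv k n i d a b) ?a_b ?mdecK // -fE.
  exact/(subvP (addvSl A U2))/memv_img/memvf.
have fU1 : (f @: U1 <= A :&: U2)%VS.
  apply/subvP => _ /memv_imgP[v U1v ->]; rewrite memv_cap memv_img ?memvf //=.
  by apply/U2J; rewrite fE emb_mulx_ffun; apply/ideal_mulx/U1J.
have le_U1 : (\dim U1 <= \dim A)%N by rewrite dimA -(dimv_ffun k); exact/dimvS/subvf.
have le_full : (#|{: mond n d.+1}| <= \dim (A + U2))%N.
  by rewrite -(dimv_ffun k); exact: dimvS full.
have := dimvS fU1; have := dimvS (capvSr A U2); have := dimv_sum_cap A U2.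
(* [set] merges convertible copies of these dimensions that [lia] would treat as distinct atoms. *)
rewrite -dimA dim_fU1; set u1 := \dim U1; set u2 := \dim U2; lia.
Qed.

End HomogeneousIdeal.

Lemma nonincreasing_eventually_constant (f : nat -> nat) m :
  (forall d, (m <= d)%N -> (f d.+1 <= f d)%N) ->
  exists d0, forall d, (d0 <= d)%N -> f d = f d0.
Proof.
move=> f_dec.
have f_mono a b : (m <= a)%N -> (a <= b)%N -> (f b <= f a)%N.
  move=> m_a /subnKC <-; elim: (b - a)%N => [|t IH]; first by rewrite addn0.
  by rewrite addnS (leq_trans (f_dec _ _)) // (leq_trans m_a) ?leq_addr.
suff [d0 [m_d0 d0_min]] : exists d0, (m <= d0)%N /\ forall d, (d0 <= d)%N -> (f d0 <= f d)%N.
  by exists d0 => d d0_d; apply/eqP; rewrite eqn_leq d0_min // f_mono.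
suff /(_ (f m) m (leqnn m) erefl) : forall N a, (m <= a)%N -> f a = N ->
    exists d0, (m <= d0)%N /\ forall d, (d0 <= d)%N -> (f d0 <= f d)%N by [].
elim/ltn_ind => N IH a m_a fa.
have [[d [a_d lt_d]] | none] := classic (exists d, (a <= d)%N /\ (f d < f a)%N).
  by apply: (IH (f d) _ d (leq_trans m_a a_d) erefl); rewrite -fa.
by exists a; split => // d a_d; rewrite leqNgt; apply/negP => lt_d; apply: none; exists d.
Qed.

Theorem mainTheorem13 (k : closedFieldType) (hchar : [pchar k] =i pred0)
  (n : nat) (hn : (1 <= n)%N) (J : spoly k n -> Prop) (hJ : homog_ideal J)
  (m : nat) (hm : (0 < m)%N)
  (hJm_nz : exists f, J f /\ homog m f /\ exists a, f a != 0)
  (hseg : exists l : nat, forall f : spoly k n, finsupp f -> homog m f ->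
            (J f <-> forall a, f a != 0 -> in_init_seg m l a))
  (hlow : exists m' : nat, (m' < m)%N /\
            exists f, J f /\ homog m' f /\ exists a, f a != 0) :
  exists P : {poly rat}, hilb_poly_is J P /\ (size P <= 1)%N.
Proof.
have [l segJ] := hseg; have [m' [lt_m' [f [Jf [homf [a fa]]]]]] := hlow.
have [b [b_seg b_last]] := init_seg_last_gt0 hJ segJ lt_m' Jf homf fa.
have Jfree := ideal_xm_free_ge hJ (ideal_xm_free_last segJ b_seg b_last).
have [hf hfP] : exists hf, forall d, hilb_fun_is J d (hf d).
  exists (fun d => sval (constructive_indefinite_description _ (hilb_fun_exists hJ d))).
  by move=> d; exact: svalP.
have hf_dec d : (m <= d)%N -> (hf d.+1 <= hf d)%N.
  move=> le_md; apply: (hilb_fun_succ_le hJ _ (hfP d) (hfP d.+1)) => c c_deg.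
  by apply: Jfree; rewrite c_deg (leq_trans le_md).
have [d0 hf_const] := nonincreasing_eventually_constant hf_dec.
exists (hf d0)%:R%:P; split; last exact: size_polyC_leq1.
exists d0 => d le_d0; exists (hf d).
by split; [exact: hfP | rewrite hornerC hf_const].
Qed.
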